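(* Let $x>0$ and $p\in\mathbb{R}$. (i) If $p\in[0,1/2]$, then $W_p(x,1)\ge \hat{A}_p(x,1)$. (ii) If $p\notin(0,1/2)$, then $W_p(x,1)\le \hat{A}_p(x,1)$.
   Context: For $x>0$, $x\ne 1$ and $p\ne 0$: $\hat{A}_p(x,1)=\frac{p(x^p+1)(x-1)}{2(x^p-1)}$, with $\hat A_p(1,1)=1$ and $\hat{A}_0(x,1)=\frac{x-1}{\log x}$ (limiting value). The Wigner--Yanase--Dyson function for $p\in\mathbb{R}\setminus\{0,1\}$, $x\ne 1$ is $W_p(x,1)=\frac{p(1-p)(x-1)^2}{(x^p-1)(x^{1-p}-1)}$, with $W_p(1,1)=1$ and $W_0(x,1)=W_1(x,1)=\frac{x-1}{\log x}$ (limiting value). *)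

From Stdlib Require Import Reals Lra.
Open Scope R_scope.

(* \hat A_p(x,1), for x > 0:
   = 1 if x = 1;
   = (x-1)/ln x if p = 0 (limiting value);
   = p (x^p+1)(x-1) / (2 (x^p-1)) otherwise. *)
Definition Ahat (p x : R) : R :=
  if Req_EM_T x 1 then 1
  else if Req_EM_T p 0 then (x - 1) / ln x
  else p * (Rpower x p + 1) * (x - 1) / (2 * (Rpower x p - 1)).

(* Wigner--Yanase--Dyson function W_p(x,1), for x > 0:
   = 1 if x = 1;
   = (x-1)/ln x if p = 0 or p = 1 (limiting value);
   = p(1-p)(x-1)^2 / ((x^p-1)(x^(1-p)-1)) otherwise. *)
Definition WYD (p x : R) : R :=
  if Req_EM_T x 1 then 1
  else if Req_EM_T p 0 then (x - 1) / ln x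
  else if Req_EM_T p 1 then (x - 1) / ln x
  else p * (1 - p) * (x - 1) ^ 2 / ((Rpower x p - 1) * (Rpower x (1 - p) - 1)).

From Stdlib Require Import Reals Lra.
From Coquelicot Require Import Coquelicot.
Open Scope R_scope.

(* Write x = e^(2t) and b = 1 - 2p.  Since x^p - 1, x^(1-p) - 1 and x - 1 have the signs of
   their exponents, W_p(x,1) - Ahat_p(x,1) is a positive multiple of (1 + b) t (b sinh t - sinh (bt)).
   The function b (1 - b^2) (b sinh t - sinh (bt)) vanishes at 0 and has derivative
   b^2 (1 - b^2) (cosh t - cosh (bt)) >= 0, so it has the sign of t; as
   b (1 - b^2) = 4 p (1 - p) (1 - 2p), the difference W - Ahat has the sign of p (1 - 2p).
   For p = 1 the claim is that the logarithmic mean is at most the arithmetic mean, which reduces to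
   t (t cosh t - sinh t) >= 0, proved by the same derivative argument. *)

Lemma mul_nonneg_of_deriv_nonneg (f df : R -> R) (t : R) :
  (forall y, is_derive f y (df y)) -> (forall y, 0 <= df y) -> f 0 = 0 ->
  0 <= t * f t.
Proof.
  intros hf hdf hf0.
  destruct (MVT_cor4 f df 0 (Rabs t) (fun y _ => hf y) t) as [c [hc _]].
  { rewrite Rminus_0_r; lra. }
  rewrite hf0, !Rminus_0_r in hc. rewrite hc.
  pose proof (hdf c). nra.
Qed.

Lemma exp_sub1_sign c : c <> 0 -> 0 < c * (exp c - 1).
Proof.
  intros hc. rewrite <- exp_0.
  destruct (Rtotal_order c 0) as [h|[h|h]]; [|contradiction|].
  - assert (exp c < exp 0) by (apply exp_increasing; lra). nra.
  - assert (exp 0 < exp c) by (apply exp_increasing; lra). nra.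
Qed.

Lemma exp_le_exp a b : a <= b -> exp a <= exp b.
Proof. intros [h|h]; [left; apply exp_increasing, h | subst; lra]. Qed.

Lemma cosh_Rabs t : cosh (Rabs t) = cosh t.
Proof.
  unfold Rabs; destruct (Rcase_abs t); [|reflexivity].
  unfold cosh; rewrite Ropp_involutive; lra.
Qed.

Lemma cosh_le_cosh a c : Rabs a <= Rabs c -> cosh a <= cosh c.
Proof.
  rewrite <- (cosh_Rabs a), <- (cosh_Rabs c).
  generalize (Rabs_pos a); generalize (Rabs a) (Rabs c); intros a' c' ha' hac.
  (* cosh c - cosh a = (e^c - e^a) (1 - e^-(a+c)) / 2 *)
  assert (hexp : exp a' <= exp c') by (apply exp_le_exp; lra).
  assert (hprod : exp (- c') * exp (- a') <= 1).
  { rewrite <- exp_plus, <- exp_0. apply exp_le_exp; lra. }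
  assert (exp (- c') * exp c' = 1) by (rewrite <- exp_plus, Rplus_opp_l; apply exp_0).
  assert (exp (- a') * exp a' = 1) by (rewrite <- exp_plus, Rplus_opp_l; apply exp_0).
  pose proof (exp_pos c'); pose proof (exp_pos a').
  pose proof (exp_pos (- c')); pose proof (exp_pos (- a')).
  unfold cosh; nra.
Qed.

Lemma cosh_sub_cosh_mul_sign b t : 0 <= (1 - b ^ 2) * (cosh t - cosh (b * t)).
Proof.
  rewrite <- pow2_abs. pose proof (Rabs_pos b); pose proof (Rabs_pos t).
  destruct (Rle_dec (Rabs b) 1) as [hb|hb].
  - assert (cosh (b * t) <= cosh t) by (apply cosh_le_cosh; rewrite Rabs_mult; nra).
    apply Rmult_le_pos; nra.
  - assert (cosh t <= cosh (b * t)) by (apply cosh_le_cosh; rewrite Rabs_mult; nra).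
    replace ((1 - Rabs b ^ 2) * (cosh t - cosh (b * t)))
      with ((Rabs b ^ 2 - 1) * (cosh (b * t) - cosh t)) by ring.
    apply Rmult_le_pos; nra.
Qed.

Definition sinh_defect (b t : R) : R := b * sinh t - sinh (b * t).

Lemma sinh_defect_sign b t : 0 <= b * (1 - b ^ 2) * (t * sinh_defect b t).
Proof.
  replace (b * (1 - b ^ 2) * (t * sinh_defect b t))
    with (t * (b * (1 - b ^ 2) * sinh_defect b t)) by ring.
  apply (mul_nonneg_of_deriv_nonneg (fun y => b * (1 - b ^ 2) * sinh_defect b y)
           (fun y => b ^ 2 * ((1 - b ^ 2) * (cosh y - cosh (b * y))))).
  - intros y. unfold sinh_defect, sinh, cosh. auto_derive; [exact I | field].
  - intros y. pose proof (cosh_sub_cosh_mul_sign b y). pose proof (pow2_ge_0 b). nra.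
  - unfold sinh_defect. rewrite Rmult_0_r, sinh_0. ring.
Qed.

Lemma mul_cosh_sub_sinh_sign t : 0 <= t * (t * cosh t - sinh t).
Proof.
  apply (mul_nonneg_of_deriv_nonneg (fun y => y * cosh y - sinh y) (fun y => y * sinh y)).
  - intros y. unfold sinh, cosh. auto_derive; [exact I | field].
  - intros y. apply (mul_nonneg_of_deriv_nonneg sinh cosh).
    + intros z. apply is_derive_Reals, derivable_pt_lim_sinh.
    + intros z. unfold cosh. pose proof (exp_pos z); pose proof (exp_pos (- z)). lra.
    + exact sinh_0.
  - rewrite sinh_0. ring.
Qed.

Lemma ln_mean_le_arith_mean x : 0 < x -> x <> 1 -> (x - 1) / ln x <= (x + 1) / 2.
Proof.
  intros hx hx1. set (t := ln x / 2).
  assert (hlx : ln x = 2 * t) by (unfold t; field).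
  assert (ht : t <> 0).
  { intros ht. apply hx1. rewrite <- (exp_ln x hx), hlx, ht, Rmult_0_r. exact exp_0. }
  assert (hxt : x = exp t * exp t) by (rewrite <- exp_plus, <- (exp_ln x hx); f_equal; lra).
  pose proof (exp_pos t) as het.
  assert (hsub : x - 1 = 2 * exp t * sinh t).
  { rewrite hxt. unfold sinh. rewrite exp_Ropp. field. lra. }
  assert (hadd : x + 1 = 2 * exp t * cosh t).
  { rewrite hxt. unfold cosh. rewrite exp_Ropp. field. lra. }
  rewrite hsub, hadd, hlx.
  assert (hgap : 2 * exp t * cosh t / 2 - 2 * exp t * sinh t / (2 * t)
                 = exp t * (t * (t * cosh t - sinh t)) / (t * t)) by (field; exact ht).
  assert (0 <= exp t * (t * (t * cosh t - sinh t)) / (t * t)).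
  { apply Rdiv_le_0_compat.
    - apply Rmult_le_pos; [lra | apply mul_cosh_sub_sinh_sign].
    - pose proof (Rsqr_pos_lt t ht). unfold Rsqr in *. lra. }
  lra.
Qed.

Lemma WYD_eq_Ahat_degenerate p x : x = 1 \/ p = 0 -> WYD p x = Ahat p x.
Proof. unfold WYD, Ahat. intros [-> | ->]; repeat destruct Req_EM_T; lra. Qed.

Lemma WYD_1_le_Ahat_1 x : 0 < x -> WYD 1 x <= Ahat 1 x.
Proof.
  intros hx. unfold WYD, Ahat.
  destruct (Req_EM_T x 1) as [|hx1]; [lra|].
  destruct (Req_EM_T 1 0); [lra|]. destruct (Req_EM_T 1 1); [|lra].
  rewrite Rpower_1 by exact hx.
  replace (1 * (x + 1) * (x - 1) / (2 * (x - 1))) with ((x + 1) / 2) by (field; lra).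
  exact (ln_mean_le_arith_mean x hx hx1).
Qed.

Lemma WYD_sub_Ahat_identity p X Y : X <> 1 -> Y <> 1 ->
  p * (1 - p) * (X * Y - 1) ^ 2 / ((X - 1) * (Y - 1)) - p * (X + 1) * (X * Y - 1) / (2 * (X - 1))
  = p * (X * Y - 1) / ((X - 1) * (Y - 1)) * ((2 * (1 - p) * (X * Y - 1) - (X + 1) * (Y - 1)) / 2).
Proof. intros hX hY. field. lra. Qed.

Lemma WYD_gap_factor_exp p u :
  2 * (1 - p) * (exp (p * u) * exp ((1 - p) * u) - 1) - (exp (p * u) + 1) * (exp ((1 - p) * u) - 1)
  = 2 * exp (u / 2) * sinh_defect (1 - 2 * p) (u / 2).
Proof.
  replace (p * u) with (u / 2 + - ((1 - 2 * p) * (u / 2))) by field.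
  replace ((1 - p) * u) with (u / 2 + (1 - 2 * p) * (u / 2)) by field.
  unfold sinh_defect, sinh. rewrite !exp_plus, !exp_Ropp.
  pose proof (exp_pos (u / 2)); pose proof (exp_pos ((1 - 2 * p) * (u / 2))).
  field. lra.
Qed.

Lemma WYD_sub_Ahat_sign p x : 0 < x -> x <> 1 -> p <> 0 -> p <> 1 ->
  exists c, 0 < c /\
    WYD p x - Ahat p x = c * ((1 - p) * ln x * sinh_defect (1 - 2 * p) (ln x / 2)).
Proof.
  intros hx hx1 hp0 hp1. unfold WYD, Ahat, Rpower.
  destruct (Req_EM_T x 1); [contradiction|].
  destruct (Req_EM_T p 0); [contradiction|].
  destruct (Req_EM_T p 1); [contradiction|].
  set (u := ln x).
  assert (hu : u <> 0).
  { intros hu. apply hx1. rewrite <- (exp_ln x hx). fold u. rewrite hu. exact exp_0. }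
  assert (hxu : x = exp (p * u) * exp ((1 - p) * u)).
  { rewrite <- exp_plus, <- (exp_ln x hx). fold u. f_equal. ring. }
  assert (hX := exp_sub1_sign (p * u) ltac:(apply Rmult_integral_contrapositive; tauto)).
  assert (hY := exp_sub1_sign ((1 - p) * u)
                  ltac:(apply Rmult_integral_contrapositive; split; [lra | exact hu])).
  assert (hXY := exp_sub1_sign u hu).
  replace (exp u) with x in hXY by (unfold u; symmetry; apply exp_ln, hx). rewrite hxu in hXY.
  rewrite hxu. set (X := exp (p * u)) in *. set (Y := exp ((1 - p) * u)) in *.
  assert (hX1 : X <> 1) by (intros E; rewrite E in hX; lra).
  assert (hY1 : Y <> 1) by (intros E; rewrite E in hY; lra).
  rewrite WYD_sub_Ahat_identity by assumption.
  unfold X, Y. rewrite WYD_gap_factor_exp. fold X Y.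
  set (d := p * (X * Y - 1) / ((X - 1) * (Y - 1))).
  assert (hd : 0 < (1 - p) * u * d).
  { assert (hsq : 0 < (u * (X - 1) * (Y - 1)) ^ 2).
    { apply pow2_gt_0. repeat apply Rmult_integral_contrapositive_currified;
      [exact hu | intros E; apply hX1; lra | intros E; apply hY1; lra]. }
    apply (Rmult_lt_reg_r _ _ _ hsq). rewrite Rmult_0_l.
    replace ((1 - p) * u * d * (u * (X - 1) * (Y - 1)) ^ 2)
      with (p * u * (X - 1) * (u * (X * Y - 1)) * ((1 - p) * u * (Y - 1)))
      by (unfold d; field; lra).
    apply Rmult_lt_0_compat; [apply Rmult_lt_0_compat|]; assumption. }
  exists (d * exp (u / 2) / ((1 - p) * u)). split.
  - replace (d * exp (u / 2) / ((1 - p) * u))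
      with ((1 - p) * u * d * exp (u / 2) / ((1 - p) * u) ^ 2) by (field; lra).
    apply Rdiv_lt_0_compat; [apply Rmult_lt_0_compat, exp_pos; exact hd | apply pow2_gt_0; nra].
  - field. lra.
Qed.

Lemma sinh_defect_0 t : sinh_defect 0 t = 0.
Proof. unfold sinh_defect. rewrite !Rmult_0_l, sinh_0. ring. Qed.

Lemma WYD_eq_Ahat_half x : 0 < x -> WYD (1 / 2) x = Ahat (1 / 2) x.
Proof.
  intros hx. destruct (Req_EM_T x 1) as [hx1|hx1].
  { apply WYD_eq_Ahat_degenerate. now left. }
  destruct (WYD_sub_Ahat_sign (1 / 2) x hx hx1 ltac:(lra) ltac:(lra)) as [c [_ hgap]].
  replace (1 - 2 * (1 / 2)) with 0 in hgap by field.
  rewrite sinh_defect_0, !Rmult_0_r in hgap. lra.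
Qed.

Lemma mul_WYD_sub_Ahat_nonneg p x : 0 < x -> x <> 1 -> p <> 0 -> p <> 1 ->
  0 <= p * (1 - 2 * p) * (WYD p x - Ahat p x).
Proof.
  intros hx hx1 hp0 hp1.
  destruct (WYD_sub_Ahat_sign p x hx hx1 hp0 hp1) as [c [hc ->]].
  set (t := ln x / 2).
  pose proof (sinh_defect_sign (1 - 2 * p) t) as hsign.
  replace (p * (1 - 2 * p) * (c * ((1 - p) * ln x * sinh_defect (1 - 2 * p) t)))
    with (c / 2 * ((1 - 2 * p) * (1 - (1 - 2 * p) ^ 2) * (t * sinh_defect (1 - 2 * p) t)))
    by (unfold t; field).
  apply Rmult_le_pos; lra.
Qed.

Theorem theorem3p1 (x p : R) (hx : 0 < x) :
  ((0 <= p <= 1/2) -> WYD p x >= Ahat p x) /\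
  (~ (0 < p < 1/2) -> WYD p x <= Ahat p x).
Proof.
  destruct (Req_EM_T x 1) as [hx1|hx1].
  { rewrite WYD_eq_Ahat_degenerate by auto. lra. }
  destruct (Req_EM_T p 0) as [hp0|hp0].
  { rewrite WYD_eq_Ahat_degenerate by auto. lra. }
  destruct (Req_EM_T p 1) as [->|hp1].
  { split; [lra|]. intros _. exact (WYD_1_le_Ahat_1 x hx). }
  destruct (Req_EM_T p (1 / 2)) as [->|hp2].
  { rewrite WYD_eq_Ahat_half by exact hx. lra. }
  pose proof (mul_WYD_sub_Ahat_nonneg p x hx hx1 hp0 hp1) as hgap.
  set (k := p * (1 - 2 * p)) in hgap.
  set (g := WYD p x - Ahat p x) in hgap.
  apply Rdichotomy in hp0; apply Rdichotomy in hp2.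
  split; intros hp.
  - assert (0 < k) by (unfold k; nra).
    assert (0 <= g) by nra.
    unfold g in *; lra.
  - assert (k < 0) by (unfold k; nra).
    assert (g <= 0) by nra.
    unfold g in *; lra.
Qed.
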